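(* Let $G$ be a graph with maximum degree $\Delta\ge3$. Then $\pi_T(G)<15\Delta^2$.
   Context: Graphs are finite and simple. A sequence is nonrepetitive if no block of consecutive terms has the form $r_1\dots r_nr_1\dots r_n$ with $n\ge1$. A (strong) total Thue colouring of $G$ is a colouring of $V(G)\cup E(G)$ such that for every path $v_1,e_1,v_2,\dots,e_{k-1},v_k$ in $G$ the sequence of colours of $v_1,e_1,\dots,v_k$ is nonrepetitive, the sequence of colours of $v_1,\dots,v_k$ is nonrepetitive, and the sequence of colours of $e_1,\dots,e_{k-1}$ is nonrepetitive. $\pi_T(G)$ is the minimum number of colours in a total Thue colouring of $G$. *)

From mathcomp Require Import all_boot.
Set Implicit Arguments. Unset Strict Implicit. Unset Printing Implicit Defensive.

Definition simple_graph (T : finType) (e : rel T) : Prop :=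
  symmetric e /\ irreflexive e.

Definition degree (T : finType) (e : rel T) (v : T) : nat := #|[set u | e v u]|.
Definition max_degree (T : finType) (e : rel T) : nat := \max_(v : T) degree e v.

Definition nonrepetitive (A : Type) (s : seq A) : Prop :=
  forall a r b : seq A, s = a ++ r ++ r ++ b -> r = [::].

Definition gpath (T : finType) (e : rel T) (x : T) (p : seq T) : bool :=
  path e x p && uniq (x :: p).

Fixpoint total_seq (T C : Type) (cv : T -> C) (ce : T -> T -> C)
    (x : T) (p : seq T) : seq C :=
  cv x :: match p with
          | [::] => [::]
          | y :: p' => ce x y :: total_seq cv ce y p'
          end.

(* A (strong) total Thue colouring with colours in 'I_k: cv colours vertices,
   ce colours edges (ce x y is the colour of the edge xy; it must not depend
   on the orientation of the edge). *)
Definition total_thue_colouring (T : finType) (e : rel T) (k : nat)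
    (cv : T -> 'I_k) (ce : T -> T -> 'I_k) : Prop :=
  (forall x y, e x y -> ce x y = ce y x) /\
  forall (x : T) (p : seq T), gpath e x p ->
    [/\ nonrepetitive (total_seq cv ce x p),
        nonrepetitive (map cv (x :: p)) &
        nonrepetitive (pairmap ce x p)].

Definition total_thue_colourable (T : finType) (e : rel T) (k : nat) : Prop :=
  exists (cv : T -> 'I_k) (ce : T -> T -> 'I_k), total_thue_colouring e cv ce.

From mathcomp Require Import all_boot zify ring.
From mathcomp Require boolp.
Set Implicit Arguments. Unset Strict Implicit. Unset Printing Implicit Defensive.

(* A total Thue colouring of G is a colouring of the total graph of G (the vertices and
   edges of G, adjacent when adjacent or incident in G) that is nonrepetitive along the
   vertex-edge sequence, the vertex sequence and the edge sequence of every path of G;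
   all three are paths of the total graph, whose maximum degree is at most 2Δ.  So it
   suffices that a graph of maximum degree D ≥ 1 has a colouring with 2D² + 8D colours
   that is nonrepetitive on all its paths: for D = 2Δ this is 8Δ² + 16Δ < 15Δ² colours.

   That bound is Rosenfeld's counting argument.  Let β = 2D² and let good(S) be the
   colourings of S that are nonrepetitive on paths inside S.  Adding a vertex v ∉ S
   multiplies |good(S)| by at least β.  Indeed, an extension of a good colouring of S
   that is not good has a repetitively coloured path of order 2n through v, and is
   determined by that path and its restriction to S minus the half of the path holding
   v: a good colouring of a set missing at least n - 1 vertices of S, hence one of at
   most β^(1-n) |good(S)| by induction.  At most 2n D^(2n-1) paths of order 2n pass
   through v, so at most Σ 2n D^(2n-1) β^(1-n) |good(S)| ≤ 8D |good(S)| of the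
   |Cl| |good(S)| extensions are bad. *)

Lemma sum_succ_mul_exp2 N : \sum_(n < N.+1) n.+1 * 2 ^ (N - n) + N + 3 = 2 ^ N.+2.
Proof.
elim: N => [|N IH]; first by rewrite big_ord1.
rewrite big_ord_recr /= subnn muln1.
have -> : \sum_(i < N.+1) i.+1 * 2 ^ (N.+1 - i) = 2 * \sum_(i < N.+1) i.+1 * 2 ^ (N - i).
  rewrite big_distrr; apply: eq_bigr => i _.
  by rewrite subSn -1?ltnS // expnS mulnCA.
rewrite [2 ^ N.+3]expnS -IH; lia.
Qed.

Lemma sum_repetition_weights D M :
  \sum_(n < M.+1) (n.+1).*2 * D ^ n.*2.+1 * (2 * D ^ 2) ^ (M - n)
  <= 8 * D * (2 * D ^ 2) ^ M.
Proof.
have term (n : 'I_M.+1) : (n.+1).*2 * D ^ n.*2.+1 * (2 * D ^ 2) ^ (M - n)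
    = 2 * D ^ M.*2.+1 * (n.+1 * 2 ^ (M - n)).
  have leMn : n <= M by rewrite -ltnS.
  have -> : M.*2.+1 = n.*2.+1 + 2 * (M - n) by lia.
  rewrite expnMn -expnM expnD -!muln2 /=; ring.
rewrite (eq_bigr _ (fun n _ => term n)) -big_distrr /=.
have weights : \sum_(n < M.+1) n.+1 * 2 ^ (M - n) <= 2 ^ M.+2.
  by rewrite -sum_succ_mul_exp2; lia.
apply: leq_trans (leq_mul (leqnn _) weights) _.
by rewrite expnMn -expnM !expnS -!muln2 [2 * M]mulnC; apply: eq_leq; ring.
Qed.

Lemma sum_le_size_mul (I : eqType) (r : seq I) (F : I -> nat) c :
  {in r, forall i, F i <= c} -> \sum_(i <- r) F i <= size r * c.
Proof.
move=> leFc; rewrite -sum1_size big_distrl /= big_seq [X in _ <= X]big_seq.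
by apply: leq_sum => i ir; rewrite mul1n leFc.
Qed.

Lemma card_bigcup_seq_le (I : Type) (T : finType) (r : seq I) (F : I -> {set T}) :
  #|\bigcup_(i <- r) F i| <= \sum_(i <- r) #|F i|.
Proof.
elim: r => [|i r IH]; first by rewrite !big_nil cards0.
by rewrite !big_cons cardsU (leq_trans (leq_subr _ _)) // leq_add2l.
Qed.

Lemma mem_bigcup_seq (I : eqType) (T : finType) (r : seq I) (F : I -> {set T}) i x :
  i \in r -> x \in F i -> x \in \bigcup_(j <- r) F j.
Proof. by move=> ir xF; rewrite (big_rem i ir) inE xF. Qed.

Section NonrepetitiveColouring.
Variables (X : finType) (R : rel X) (D : nat) (Cl : finType) (c0 : Cl).
Hypothesis Rsym : symmetric R.
Hypothesis Rdeg : forall x, #|[set y | R x y]| <= D.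

Local Notation colouring := {ffun X -> Cl}.
Implicit Types (S : {set X}) (f g : colouring) (b : seq X) (v x : X).

Definition repetition (f : colouring) (b : seq X) (n : nat) : Prop :=
  [/\ 0 < n, size b = n.*2, uniq b, sorted R b & map f (take n b) = map f (drop n b)].

Definition nonrep_on (S : {set X}) (f : colouring) : Prop :=
  forall b n, {subset b <= S} -> ~ repetition f b n.

Definition supported (S : {set X}) (f : colouring) : bool :=
  [forall x, (x \notin S) ==> (f x == c0)].

(* Colourings of [S] are normalised to [c0] outside [S], so that they form a finite set. *)
Definition good (S : {set X}) : {set colouring} :=
  [set f | supported S f && boolp.asbool (nonrep_on S f)].

Definition extensions (S : {set X}) (v : X) : {set colouring} :=
  [set f | supported (v |: S) f && boolp.asbool (nonrep_on S f)].

Lemma supportedP S f : reflect (forall x, x \notin S -> f x = c0) (supported S f).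
Proof. by apply: (iffP forall_inP) => fS x /fS => [/eqP|->]. Qed.

Lemma goodP S f :
  reflect ((forall x, x \notin S -> f x = c0) /\ nonrep_on S f) (f \in good S).
Proof.
by rewrite inE; apply: (iffP andP) => -[fS nrS]; split; apply/supportedP || apply/boolp.asboolP.
Qed.

Lemma extensionsP S v f :
  reflect ((forall x, x \notin v |: S -> f x = c0) /\ nonrep_on S f) (f \in extensions S v).
Proof.
by rewrite inE; apply: (iffP andP) => -[fS nrS]; split; apply/supportedP || apply/boolp.asboolP.
Qed.

Lemma nonrep_on_sub S1 S2 f : S1 \subset S2 -> nonrep_on S2 f -> nonrep_on S1 f.
Proof. by move=> /subsetP sub12 nrf b n bS1; apply: nrf => x /bS1 /sub12. Qed.

Lemma eq_nonrep_on S f g : {in S, f =1 g} -> nonrep_on S f -> nonrep_on S g.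
Proof.
move=> efg nrf b n bS [n_gt0 sb ub sorted_b rep]; apply: (nrf b n bS); split => //.
have map_eq s : {subset s <= b} -> map f s = map g s.
  by move=> sb'; apply/eq_in_map => x /sb' /bS /efg.
by rewrite !map_eq // => x; [apply: mem_drop | apply: mem_take].
Qed.

Definition restrict (S : {set X}) (f : colouring) : colouring :=
  [ffun x => if x \in S then f x else c0].

Lemma restrict_good S S' f : S' \subset S -> nonrep_on S f -> restrict S' f \in good S'.
Proof.
move=> subS nrf; apply/goodP; split=> [x xNS'|]; first by rewrite ffunE (negbTE xNS').
apply: (eq_nonrep_on (f := f)); last exact: nonrep_on_sub subS nrf.
by move=> x xS'; rewrite ffunE xS'.
Qed.

Lemma good_sub_extensions S v : good (v |: S) \subset extensions S v.
Proof.
apply/subsetP => f /goodP[fS nrf]; apply/extensionsP; split => //.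
exact: nonrep_on_sub (subsetUr _ _) nrf.
Qed.

Lemma card_extensions S v : v \notin S -> #|extensions S v| = #|good S| * #|Cl|.
Proof.
move=> vNS; pose recolour (gc : colouring * Cl) : colouring :=
  [ffun x => if x == v then gc.2 else gc.1 x].
have -> : extensions S v = recolour @: setX (good S) [set: Cl].
  apply/setP => f; apply/extensionsP/imsetP => [[fS nrf]|[[g c] gcS ->]].
    exists (restrict S f, f v); first by rewrite in_setX in_setT (restrict_good (subxx S)).
    apply/ffunP => x; rewrite !ffunE /=; case: eqP => [->//|/eqP xNv].
    by case: ifP => // xNS; rewrite fS // !inE negb_or xNv xNS.
  move: gcS; rewrite in_setX in_setT andbT => /goodP[gS nrg]; split.
    by move=> x; rewrite !inE negb_or ffunE => /andP[/negbTE -> /gS].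
  apply: (eq_nonrep_on (f := g)) nrg => x xS; rewrite ffunE.
  by case: eqP => // xv; move: vNS; rewrite -xv xS.
rewrite card_in_imset ?cardsX ?cardsT // => -[g c] [g' c'].
rewrite !in_setX !in_setT !andbT => /goodP[gS _] /goodP[g'S _] /ffunP eqgc.
have ecc' : c = c' by have := eqgc v; rewrite !ffunE eqxx.
congr (_, _) => //; apply/ffunP => x; have := eqgc x; rewrite !ffunE.
by case: eqP => // ->; rewrite gS // g'S.
Qed.

Fixpoint walks (x : X) (m : nat) : seq (seq X) :=
  if m is m'.+1 then [seq x :: w | y <- enum [set y | R x y], w <- walks y m']
  else [:: [:: x]].

Lemma size_walks x m : size (walks x m) <= D ^ m.
Proof.
elim: m x => [|m IH] x //=; rewrite size_allpairs_dep sumnE big_map.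
apply: leq_trans (sum_le_size_mul (c := D ^ m) _) _ => [y _|]; first exact: IH.
by rewrite -cardE expnS leq_mul2r Rdeg orbT.
Qed.

Lemma mem_walks x w : path R x w -> x :: w \in walks x (size w).
Proof.
elim: w x => [|y w IH] x /=; first by rewrite inE.
case/andP=> Rxy /IH wW; apply/allpairsPdep; exists y, (y :: w).
by rewrite mem_enum inE Rxy.
Qed.

(* Every [R]-sorted sequence of length [2m] through [v] is a reversed walk from [v]
   glued to a walk from [v]. *)
Definition paths_through (v : X) (m : nat) : seq (seq X) :=
  flatten [seq [seq rev p ++ behead q | p <- walks v j, q <- walks v (m.*2.-1 - j)]
          | j <- iota 0 m.*2].

Lemma size_paths_through v m : size (paths_through v m) <= m.*2 * D ^ m.*2.-1.
Proof.
rewrite size_flatten /shape -map_comp sumnE big_map -[in X in _ <= X * _](size_iota 0 m.*2).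
apply: sum_le_size_mul => j; rewrite mem_iota add0n => ltjm /=.
rewrite size_allpairs; apply: leq_trans (leq_mul (size_walks v j) (size_walks v _)) _.
by rewrite -expnD subnKC // -ltnS prednK // (leq_ltn_trans _ ltjm).
Qed.

Lemma mem_paths_through v m b :
  size b = m.*2 -> sorted R b -> v \in b -> b \in paths_through v m.
Proof.
move=> sb sorted_b vb; set j := index v b.
have ltjb : j < size b by rewrite index_mem.
have eb : b = take j b ++ v :: drop j.+1 b.
  by rewrite -(nth_index v vb) -drop_nth // cat_take_drop.
set p := take j b; set q := drop j.+1 b.
have size_q : size q = m.*2.-1 - j by rewrite size_drop sb; lia.
move: sorted_b; rewrite eb sorted_cat_cons => /andP[sorted_p path_q].
apply/flatten_mapP; exists j; first by rewrite mem_iota add0n -sb.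
have -> : p ++ v :: q = rev (v :: rev p) ++ behead (v :: q).
  by rewrite rev_cons revK cat_rcons.
apply: allpairs_f; last by rewrite -size_q; apply: mem_walks.
have : sorted R (rev (rcons p v)).
  by rewrite rev_sorted; apply: sub_sorted sorted_p => x y; rewrite Rsym.
by rewrite rev_rcons => /mem_walks; rewrite size_rev size_take ltjb.
Qed.

Definition vhalf v b : seq X :=
  let h := (size b)./2 in if v \in take h b then take h b else drop h b.

Definition ohalf v b : seq X :=
  let h := (size b)./2 in if v \in take h b then drop h b else take h b.

Lemma perm_halves v b : perm_eq (vhalf v b ++ ohalf v b) b.
Proof. by rewrite /vhalf /ohalf; case: ifP => _; [|rewrite perm_catC]; rewrite cat_take_drop. Qed.

Lemma vhalf_sub v b : {subset vhalf v b <= b}.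
Proof. by move=> x xH; rewrite -(perm_mem (perm_halves v b)) mem_cat xH. Qed.

Lemma ohalf_sub v b : {subset ohalf v b <= b}.
Proof. by move=> x xO; rewrite -(perm_mem (perm_halves v b)) mem_cat xO orbT. Qed.

Lemma uniq_halves v b : uniq b -> uniq (vhalf v b ++ ohalf v b).
Proof. by rewrite (perm_uniq (perm_halves v b)). Qed.

Lemma size_halves v b n : size b = n.*2 -> size (vhalf v b) = n /\ size (ohalf v b) = n.
Proof.
move=> sb; have sizes : size (take n b) = n /\ size (drop n b) = n.
  have le_nb : n <= size b by rewrite sb -addnn leq_addr.
  by rewrite size_takel // size_drop sb -addnn addnK.
case: sizes => size_tb size_db.
by rewrite /vhalf /ohalf sb doubleK; case: ifP.
Qed.

Lemma mem_vhalf v b : v \in b -> v \in vhalf v b.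
Proof.
rewrite /vhalf; case: ifP => // vNtake.
by rewrite -{1}(cat_take_drop (size b)./2 b) mem_cat vNtake.
Qed.

Lemma map_halves v b n f : size b = n.*2 ->
  map f (take n b) = map f (drop n b) -> map f (vhalf v b) = map f (ohalf v b).
Proof. by move=> sb rep; rewrite /vhalf /ohalf sb doubleK; case: ifP. Qed.

(* A colouring that repeats along [b] is recovered from its values off the half of
   [b] containing [v], by copying the colours of the other half. *)
Definition reconstruct v b g : colouring :=
  [ffun x => if x \in vhalf v b then g (nth v (ohalf v b) (index x (vhalf v b))) else g x].

Lemma repetition_reconstruct S v f b n :
  v \notin S -> f \in extensions S v -> {subset b <= v |: S} -> v \in b ->
  repetition f b n -> f \in reconstruct v b @: good (S :\: [set x in vhalf v b]).
Proof.
move=> vNS /extensionsP[fS nrf] bvS vb [_ sb ub _ rep].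
set H := vhalf v b; set O := ohalf v b.
have [size_H size_O] := size_halves v sb.
have vH : v \in H := mem_vhalf vb.
have uHO : uniq (H ++ O) := uniq_halves v ub.
have ONH x : x \in O -> x \notin H.
  by move=> xO; apply/negP => xH; move: uHO; rewrite cat_uniq => /and3P[_ /hasP[]]; exists x.
have mapHO := map_halves v sb rep.
apply/imsetP; exists (restrict (S :\: [set x in H]) f).
  exact: restrict_good (subsetDl _ _) nrf.
apply/ffunP => x; rewrite !ffunE; case: ifP => xH; last first.
  rewrite inE inE xH /=; case: ifP => // xNS; apply: fS.
  by rewrite !inE xNS orbF; apply: contraFN xH => /eqP ->.
have ltxH : index x H < n by rewrite -size_H index_mem.
set y := nth v O (index x H).
have yO : y \in O by rewrite mem_nth // size_O.
have yS : y \in S :\: [set x in H].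
  rewrite !inE (negbTE (ONH y yO)) /=.
  have := bvS y (ohalf_sub yO); rewrite !inE => /orP[/eqP yv|//].
  by move: (ONH y yO); rewrite yv vH.
rewrite yS -{1}(nth_index v xH) -(nth_map v (f v)) ?size_H //.
by rewrite mapHO (nth_map v) ?size_O.
Qed.

Hypothesis D_gt0 : 0 < D.
Hypothesis card_Cl : 2 * D ^ 2 + 8 * D <= #|Cl|.
Local Notation beta := (2 * D ^ 2).

Lemma beta_gt0 : 0 < beta.
Proof. by rewrite muln_gt0 expn_gt0 D_gt0. Qed.

Definition grows_at S : Prop :=
  forall v, v \notin S -> beta * #|good S| <= #|good (v |: S)|.

Section Growth.
Variable S : {set X}.
Hypothesis grows_proper : forall S', S' \proper S -> grows_at S'.

Lemma card_good_setD m (Y : {set X}) :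
  #|Y| = m -> Y \subset S -> beta ^ m * #|good (S :\: Y)| <= #|good S|.
Proof.
elim: m Y => [|m IH] Y cardY YS.
  by move/cards0_eq: cardY => ->; rewrite setD0 mul1n.
have [y yY] : exists y, y \in Y by apply/card_gt0P; rewrite cardY.
have yS := subsetP YS y yY.
have cardYy : #|Y :\ y| = m by move: cardY; rewrite (cardsD1 y) yY add1n => -[].
have SYy : S :\: (Y :\ y) = y |: (S :\: Y).
  by apply/setP => x; rewrite !inE; case: eqP => [->|]; rewrite ?yY ?yS.
have ltSY : S :\: Y \proper S.
  by apply: sub_proper_trans (properD1 yS); apply: setDS; rewrite sub1set.
rewrite expnSr -mulnA; apply: leq_trans (IH _ cardYy (subset_trans (subD1set Y y) YS)).
by rewrite SYy leq_mul2l (grows_proper ltSY) ?orbT // inE yY.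
Qed.

Lemma card_vhalf_setI v b n :
  size b = n.+1.*2 -> uniq b -> v \in b -> {subset b <= v |: S} ->
  n <= #|S :&: [set x in vhalf v b]|.
Proof.
move=> sb ub vb bvS; set Z := [set x in vhalf v b].
have uH : uniq (vhalf v b) by have := uniq_halves v ub; rewrite cat_uniq => /and3P[].
have cardZ : #|Z| = n.+1 by rewrite cardsE (card_uniqP uH); case: (size_halves v sb).
have vZ : v \in Z by rewrite inE mem_vhalf.
have : Z :\ v \subset S :&: Z.
  apply/subsetP => x; rewrite !inE => /andP[xNv xH]; rewrite xH andbT.
  by have := bvS x (vhalf_sub xH); rewrite !inE (negbTE xNv).
by move/subset_leq_card; move: (cardsD1 v Z); rewrite vZ cardZ; lia.
Qed.

Definition candidates v n : seq (seq X) :=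
  [seq b <- paths_through v n.+1 |
    [&& uniq b, v \in b, size b == n.+1.*2 & all (mem (v |: S)) b]].

Lemma bad_extensions_sub v : v \notin S ->
  extensions S v :\: good (v |: S) \subset
  \bigcup_(0 <= n < #|X|) \bigcup_(b <- candidates v n)
     reconstruct v b @: good (S :\: [set x in vhalf v b]).
Proof.
move=> vNS; apply/subsetP => f; rewrite inE => /andP[fNgood fext].
have /extensionsP[fS nrf] := fext.
have [b [n [bvS rep]]] : exists b n, {subset b <= v |: S} /\ repetition f b n.
  apply: boolp.contrapT => noRep; apply: (negP fNgood); apply/goodP; split => // b n bvS rep.
  by apply: noRep; exists b, n.
have vb : v \in b.
  apply/negPn/negP => vNb; apply: (nrf b n) rep => x xb.
  by have := bvS x xb; rewrite !inE => /orP[/eqP xv|//]; move: vNb; rewrite -xv xb.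
case: n rep => [[]//|n] rep; have [_ sb ub sorted_b _] := rep.
have ltnX : n < #|X| by have := max_card (mem b); rewrite (card_uniqP ub) sb; lia.
apply: (mem_bigcup_seq (i := n)); first by rewrite mem_index_iota.
apply: (mem_bigcup_seq (i := b)); last exact: repetition_reconstruct rep.
rewrite mem_filter ub vb sb eqxx mem_paths_through //= andbT.
by apply/allP.
Qed.

Lemma card_bad_extensions v : v \notin S ->
  #|extensions S v :\: good (v |: S)| <= 8 * D * #|good S|.
Proof.
move=> vNS; set G := #|good S|.
have [M cardX] : exists M, #|X| = M.+1.
  by exists #|X|.-1; rewrite prednK //; apply/card_gt0P; exists v.
have candidate_bound (n : 'I_M.+1) b : b \in candidates v n ->
    beta ^ M * #|good (S :\: [set x in vhalf v b])| <= beta ^ (M - n) * G.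
  rewrite mem_filter => /andP[/and4P[ub vb /eqP sb /allP bvS] _].
  have leMn : n <= M by rewrite -ltnS.
  rewrite -{1}(subnK leMn) expnD -mulnA leq_mul2l -[S :\: _]set0U -(setDv S) -setDIr.
  apply/orP; right; apply: leq_trans (card_good_setD (erefl _) (subsetIl _ _)).
  by rewrite leq_mul // leq_pexp2l ?beta_gt0 ?card_vhalf_setI.
have betaM_gt0 : 0 < beta ^ M by rewrite expn_gt0 beta_gt0.
(* Scaling by [beta ^ M] keeps the weights [beta ^ (-n)] of [candidate_bound] integral. *)
rewrite -(leq_pmul2l betaM_gt0).
apply: leq_trans (leq_mul (leqnn _) (subset_leq_card (bad_extensions_sub vNS))) _.
apply: leq_trans (leq_mul (leqnn _) (card_bigcup_seq_le _ _)) _.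
rewrite big_distrr cardX big_mkord /=.
apply: leq_trans (_ : \sum_(n < M.+1)
    (n.+1).*2 * D ^ n.*2.+1 * beta ^ (M - n) * G <= _); last first.
  by rewrite -big_distrl mulnCA mulnA leq_mul2r sum_repetition_weights orbT.
apply: leq_sum => n _.
apply: leq_trans (leq_mul (leqnn _) (card_bigcup_seq_le _ _)) _; rewrite big_distrr /=.
apply: leq_trans (sum_le_size_mul (c := beta ^ (M - n) * G) _) _.
  move=> b bc; apply: leq_trans (candidate_bound n b bc).
  by rewrite leq_mul2l leq_imset_card orbT.
rewrite -mulnA leq_mul2r size_filter (leq_trans (count_size _ _)) ?orbT //.
exact: size_paths_through.
Qed.

Lemma grows_at_proper : grows_at S.
Proof.
move=> v vNS; set G := #|good S|.
have card_bad := card_bad_extensions vNS.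
have sub := good_sub_extensions S v.
have := subset_leq_card sub; have := leq_mul (leqnn G) card_Cl.
rewrite cardsD (setIidPr sub) card_extensions // -/G in card_bad.
rewrite mulnDr => ? ?; lia.
Qed.

End Growth.

Lemma grows_everywhere S : grows_at S.
Proof.
elim: {S}_.+1 {-2}S (ltnSn #|S|) => // m IH S ltSm.
by apply: grows_at_proper => S' ltS'S; apply: IH; move: (proper_card ltS'S); lia.
Qed.

Lemma exists_nonrep_on_setT : exists f, nonrep_on [set: X] f.
Proof.
have := @card_good_setD [set: X] (fun S' _ => @grows_everywhere S') _ _ (erefl _) (subxx _).
rewrite setDv => growth.
have const_good : [ffun=> c0] \in good set0.
  apply/goodP; split => [x _|[|x b] n bS [n_gt0 sb _ _ _]]; first by rewrite ffunE.
    by rewrite -(doubleK n) -sb in n_gt0.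
  by have := bS x (mem_head _ _); rewrite inE.
have : 0 < #|good [set: X]|.
  apply: leq_trans growth; rewrite muln_gt0 expn_gt0 beta_gt0.
  by apply/card_gt0P; exists [ffun=> c0].
by case/card_gt0P => f /goodP[_ nrf]; exists f.
Qed.

Lemma exists_nonrepetitive_colouring :
  exists f : X -> Cl, forall s, uniq s -> sorted R s -> nonrepetitive (map f s).
Proof.
have [f nrf] := exists_nonrep_on_setT; exists f => s us sorted_s a r c es.
case: r es => [//|x r] es; exfalso.
set n := size (x :: r); set b := take (n + n) (drop (size a) s).
have map_b : map f b = (x :: r) ++ (x :: r).
  by rewrite /b map_take map_drop es drop_size_cat // catA take_size_cat // size_cat.
apply: (nrf b n) => [y _|]; first by rewrite in_setT.
split => //.
- by rewrite -(size_map f) map_b size_cat addnn.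
- exact/take_uniq/drop_uniq.
- exact/take_sorted/drop_sorted.
- by rewrite map_take map_drop map_b take_size_cat // drop_size_cat.
Qed.

End NonrepetitiveColouring.

Section TotalGraph.
Variables (T : finType) (e : rel T).
Hypotheses (e_sym : symmetric e) (e_irr : irreflexive e).
Local Notation Delta := (max_degree e).

(* Vertices of the total graph are the vertices [inl x] and the edges [inr [set x; y]]
   of [e], adjacent when adjacent or incident in [e]; other sets [inr E] are isolated. *)
Definition total_adj (a b : T + {set T}) : bool :=
  match a, b with
  | inl x, inl y => e x y
  | inl x, inr E | inr E, inl x => [exists y, e x y && (E == [set x; y])]
  | inr E, inr F =>
      [exists x, exists y, exists z, [&& e x y, e x z, y != z, E == [set x; y] & F == [set x; z]]]
  end.

Lemma total_adj_sym : symmetric total_adj.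
Proof.
case=> [x|E] [y|F] //=.
by apply/existsP/existsP => -[x /existsP[y /existsP[z /and5P[exy exz yNz eE eF]]]];
  exists x; apply/existsP; exists z; apply/existsP; exists y;
  rewrite exz exy eq_sym yNz eE eF.
Qed.

Lemma card_neighbours_le x : #|[set y | e x y]| <= Delta.
Proof. exact: (leq_bigmax (F := degree e)). Qed.

Lemma set2_eq (x y a b : T) :
  x != y -> [set x; y] = [set a; b] -> (x = a /\ y = b) \/ (x = b /\ y = a).
Proof.
move=> xNy exy; have := set21 x y; have := set22 x y; rewrite exy.
by case/set2P=> ey /set2P[] ex; subst x y; rewrite ?eqxx in xNy; auto.
Qed.

Lemma total_adj_degree_vertex x : #|[set z | total_adj (inl x) z]| <= 2 * Delta.
Proof.
set N := [set y | e x y].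
have sub : [set z | total_adj (inl x) z] \subset inl @: N :|: inr @: ((fun y => [set x; y]) @: N).
  apply/subsetP => -[y|E]; rewrite !inE /= => adj; apply/orP.
    by left; apply/imsetP; exists y; rewrite ?inE.
  case/existsP: adj => y /andP[exy /eqP ->]; right.
  by apply/imsetP; exists [set x; y] => //; apply/imsetP; exists y; rewrite ?inE.
apply: leq_trans (subset_leq_card sub) _; apply: leq_trans (leq_card_setU _ _) _.
rewrite mul2n -addnn; apply: leq_add.
  exact: leq_trans (leq_imset_card _ _) (card_neighbours_le x).
exact: leq_trans (leq_imset_card _ _) (leq_trans (leq_imset_card _ _) (card_neighbours_le x)).
Qed.

Lemma total_adj_edge_rep E w : total_adj (inr E) w -> exists a b, e a b /\ E = [set a; b].
Proof.
case: w => [u|F] /existsP[x adj]; first by case/andP: adj => exy /eqP ->; exists u, x.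
by case/existsP: adj => y /existsP[z /and5P[exy _ _ /eqP -> _]]; exists x, y.
Qed.

Lemma total_adj_degree_edge E : #|[set z | total_adj (inr E) z]| <= 2 * Delta.
Proof.
have [-> | [w]] := set_0Vmem [set z | total_adj (inr E) z]; first by rewrite cards0.
rewrite inE => /total_adj_edge_rep[a [b [eab ->]]].
set Na := [set z | e a z] :\ b; set Nb := [set z | e b z] :\ a.
have sub : [set z | total_adj (inr [set a; b]) z] \subset
    inl @: [set a; b] :|: inr @: ((fun z => [set a; z]) @: Na :|: (fun z => [set b; z]) @: Nb).
  apply/subsetP => -[u|F]; rewrite !inE /= => adj; apply/orP.
    case/existsP: adj => y /andP[_ /eqP eE]; left; apply/imsetP; exists u => //.
    by rewrite eE set21.
  right; apply/imsetP; exists F => //.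
  case/existsP: adj => x /existsP[y /existsP[z /and5P[exy exz yNz /eqP eE /eqP ->]]].
  have xNy : x != y by apply: contraTneq exy => ->; rewrite e_irr.
  rewrite inE; case: (set2_eq xNy (esym eE)) => -[ex ey]; subst x y; apply/orP.
    by left; apply/imsetP; exists z; rewrite // !inE exz eq_sym yNz.
  by right; apply/imsetP; exists z; rewrite // !inE exz eq_sym yNz.
have cardNa : #|[set z | e a z]| = #|Na|.+1 by rewrite (cardsD1 b) inE eab.
have cardNb : #|[set z | e b z]| = #|Nb|.+1 by rewrite (cardsD1 a) inE e_sym eab.
apply: leq_trans (subset_leq_card sub) _; apply: leq_trans (leq_card_setU _ _) _.
apply: leq_trans (leq_add (leq_imset_card _ _) (leq_imset_card _ _)) _.
apply: leq_trans (leq_add (leqnn _) (leq_card_setU _ _)) _.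
apply: leq_trans (leq_add (leqnn _) (leq_add (leq_imset_card _ _) (leq_imset_card _ _))) _.
have := card_neighbours_le a; have := card_neighbours_le b.
have : #|[set a; b]| <= 2 by rewrite cards2; case: (_ != _).
lia.
Qed.

Lemma total_adj_degree w : #|[set z | total_adj w z]| <= 2 * Delta.
Proof. by case: w => [x|E]; [apply: total_adj_degree_vertex | apply: total_adj_degree_edge]. Qed.

Fixpoint total_walk (x : T) (p : seq T) : seq (T + {set T}) :=
  inl x :: if p is y :: p' then inr [set x; y] :: total_walk y p' else [::].

Definition edge_walk (x : T) (p : seq T) : seq (T + {set T}) :=
  pairmap (fun a b => inr [set a; b]) x p.

Definition support (w : T + {set T}) : {set T} :=
  match w with inl x => [set x] | inr E => E end.

Lemma support_total_walk x p w : w \in total_walk x p -> {subset support w <= x :: p}.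
Proof.
elim: p x => [|y p IH] x /=; first by rewrite inE => /eqP -> z; rewrite /= !inE.
rewrite !inE => /or3P[/eqP -> | /eqP -> | /IH sub] z /=; rewrite !inE.
- by move=> ->.
- by case/orP=> ->; rewrite ?orbT.
- by move/sub; rewrite inE => ->; rewrite orbT.
Qed.

Lemma support_edge_walk x p w : w \in edge_walk x p -> {subset support w <= x :: p}.
Proof.
elim: p x => [|y p IH] x //=; rewrite inE => /orP[/eqP -> | /IH sub] z /=; rewrite !inE.
  by case/orP=> ->; rewrite ?orbT.
by move/sub; rewrite inE => ->; rewrite orbT.
Qed.

Lemma notin_supported (W : seq (T + {set T})) (s : seq T) x w :
  (forall w', w' \in W -> {subset support w' <= s}) ->
  x \in support w -> x \notin s -> w \notin W.
Proof. by move=> subW xw; apply: contra => /subW; apply. Qed.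

Lemma total_walk_uniq x p : uniq (x :: p) -> uniq (total_walk x p).
Proof.
elim: p x => [|y p IH] x // /andP[xNyp uyp].
have xNW w : x \in support w -> w \notin total_walk y p.
  by move=> xw; apply: notin_supported (@support_total_walk y p) xw xNyp.
by rewrite /= IH // andbT inE negb_or !xNW //= !inE eqxx.
Qed.

Lemma total_walkE x p : total_walk x p = inl x :: behead (total_walk x p).
Proof. by case: p. Qed.

Lemma total_walk_sorted x p : path e x p -> sorted total_adj (total_walk x p).
Proof.
elim: p x => [|y p IH] x //= /andP[exy /IH]; rewrite total_walkE /= => ->.
rewrite andbT; apply/andP; split; apply/existsP; first by exists y; rewrite exy eqxx.
by exists x; rewrite e_sym exy setUC eqxx.
Qed.

Lemma edge_walk_uniq x p : uniq (x :: p) -> uniq (edge_walk x p).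
Proof.
elim: p x => [|y p IH] x // /andP[xNyp uyp].
rewrite /= IH // andbT; apply: notin_supported (@support_edge_walk y p) _ xNyp.
by rewrite !inE eqxx.
Qed.

Lemma edge_walk_sorted x p : path e x p -> uniq (x :: p) -> sorted total_adj (edge_walk x p).
Proof.
elim: p x => [|y p IH] x //= /andP[exy pyp] /andP[xNyp uyp].
have := IH y pyp uyp; case: p pyp xNyp {uyp IH} => [//|z p] /= /andP[eyz _] xNyzp ->.
rewrite andbT; apply/existsP; exists y; apply/existsP; exists x; apply/existsP; exists z.
by rewrite e_sym exy eyz setUC !eqxx; move: xNyzp; rewrite !inE !negb_or => /and3P[_ -> _].
Qed.

Lemma total_seq_walk (Cl : Type) (f : T + {set T} -> Cl) x p :
  total_seq (fun a => f (inl a)) (fun a b => f (inr [set a; b])) x p = map f (total_walk x p).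
Proof. by elim: p x => [|y p IH] x //=; rewrite IH. Qed.

Lemma pairmap_edge_walk (Cl : Type) (f : T + {set T} -> Cl) x p :
  pairmap (fun a b => f (inr [set a; b])) x p = map f (edge_walk x p).
Proof. by elim: p x => [|y p IH] x //=; rewrite IH. Qed.

End TotalGraph.

Theorem theorem18 (T : finType) (e : rel T) :
  simple_graph e -> 3 <= max_degree e ->
  exists k, k < 15 * (max_degree e) ^ 2 /\ total_thue_colourable e k.
Proof.
move=> [e_sym e_irr] Delta_ge3; set Delta := max_degree e in Delta_ge3 *.
set k := 2 * (2 * Delta) ^ 2 + 8 * (2 * Delta).
have k_gt0 : 0 < k by rewrite /k -!mulnn; nia.
have degree_gt0 : 0 < 2 * Delta by lia.
have card_k : 2 * (2 * Delta) ^ 2 + 8 * (2 * Delta) <= #|'I_k| by rewrite card_ord.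
have [f nrf] := exists_nonrepetitive_colouring (Ordinal k_gt0) (total_adj_sym e_sym)
  (total_adj_degree e_sym e_irr) degree_gt0 card_k.
exists k; split; first by rewrite /k -!mulnn; nia.
exists (fun x => f (inl x)), (fun x y => f (inr [set x; y])); split.
  by move=> x y _; rewrite setUC.
move=> x p /andP[pxp uxp]; split.
- by rewrite total_seq_walk; apply: nrf; [apply: total_walk_uniq | apply: total_walk_sorted].
- rewrite (map_comp f inl); apply: nrf; first by rewrite map_inj_uniq // => a b [].
  by rewrite /= path_map.
- by rewrite pairmap_edge_walk; apply: nrf; [apply: edge_walk_uniq | apply: edge_walk_sorted].
Qed.
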